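(* Let $n\ge 2$, $\ell\ge 1$, and let $\mathcal{L}\in\mathcal{A}(n,n-2,\ell)$. The all-one vector $\mathbf{1}\in\mathbb{Z}^n$ can be covered only by a codeword of the form $\mathbf{1}-\lambda\mathbf{e}_i$ for some $1\le i\le n$ and some integer $0\le\lambda\le\ell$.
   Context: $\mathcal{S}(n,t,\ell)=\{\mathcal{E}\in\mathbb{Z}^n: 0\le\varepsilon_i\le\ell \text{ for all } i,\ w_H(\mathcal{E})\le t\}$, with $w_H$ the number of nonzero coordinates. A lattice here is the set of integer combinations of $n$ linearly independent vectors of $\mathbb{Z}^n$. $\mathcal{A}(n,t,\ell)$ is the set of lattices $\mathcal{L}\subseteq\mathbb{Z}^n$ such that the translates $X+\mathcal{S}(n,t,\ell)$, $X\in\mathcal{L}$, are pairwise disjoint; elements of $\mathcal{L}$ are codewords. A codeword $X\in\mathcal{L}$ covers $Y\in\mathbb{Z}^n$ if $Y=X+\mathcal{E}$ for some $\mathcal{E}\in\mathcal{S}(n,n-2,\ell)$. $\mathbf{e}_i$ is the $i$-th unit vector. *)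

From mathcomp Require Import all_boot all_order all_algebra.
Set Implicit Arguments. Unset Strict Implicit. Unset Printing Implicit Defensive.
Import Order.TTheory GRing.Theory Num.Theory.
Local Open Scope ring_scope.

Definition wH (n : nat) (v : 'rV[int]_n) : nat := #|[set i : 'I_n | v 0 i != 0]|.

Definition inS (n t l : nat) (E : 'rV[int]_n) : Prop :=
  (forall i : 'I_n, 0 <= E 0 i <= l%:Z) /\ (wH E <= t)%N.

Definition is_lattice (n : nat) (L : 'rV[int]_n -> Prop) : Prop :=
  exists B : 'M[int]_n,
    (forall c : 'rV[int]_n, c *m B = 0 -> c = 0) /\
    (forall x : 'rV[int]_n, L x <-> exists c : 'rV[int]_n, x = c *m B).

Definition inA (n t l : nat) (L : 'rV[int]_n -> Prop) : Prop :=
  is_lattice L /\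
  forall X Y E1 E2 : 'rV[int]_n, L X -> L Y -> X != Y ->
    inS t l E1 -> inS t l E2 -> X + E1 != Y + E2.

Definition covers (n l : nat) (X Y : 'rV[int]_n) : Prop :=
  exists E : 'rV[int]_n, inS (n - 2) l E /\ Y = X + E.

Definition ones (n : nat) : 'rV[int]_n := const_mx 1.
Definition unitv (n : nat) (i : 'I_n) : 'rV[int]_n := delta_mx 0 i.

(** If the covering error [E] of [1 = X + E] had two nonzero coordinates,
    then lowering each nonzero coordinate of [E] by one and taking the
    indicator of the zero set of [E] gives two errors of [S(n, n-2, l)] with
    [X + (E - 1_{supp E}) = 1_{~ supp E} = 0 + 1_{~ supp E}], so the balls
    around the distinct codewords [X] and [0] would meet.  Hence [E] has at
    most one nonzero coordinate, i.e. [E = lambda e_i]. *)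

From mathcomp Require Import all_boot all_order all_algebra.
From mathcomp Require Import zify.
Set Implicit Arguments. Unset Strict Implicit. Unset Printing Implicit Defensive.
Import Order.TTheory GRing.Theory Num.Theory.
Local Open Scope ring_scope.

Definition supp (n : nat) (v : 'rV[int]_n) : {set 'I_n} := [set i | v 0 i != 0].

Definition indicator (n : nat) (A : {set 'I_n}) : 'rV[int]_n :=
  \row_i (if i \in A then 1 else 0).

Section Support.

Variable n : nat.
Implicit Types (v E : 'rV[int]_n) (A : {set 'I_n}).

Lemma wH_supp v : wH v = #|supp v|.
Proof. by []. Qed.

Lemma supp_indicator A : supp (indicator A) = A.
Proof. by apply/setP => i; rewrite !inE mxE; case: (i \in A). Qed.

Lemma ones_subr_indicator A : ones n - indicator A = indicator (~: A).
Proof. by apply/rowP => i; rewrite !mxE inE; case: (i \in A); rewrite ?subrr ?subr0. Qed.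

Lemma inS_indicator t l A :
  (1 <= l)%N -> (#|A| <= t)%N -> inS t l (indicator A).
Proof.
move=> l_ge1 At; split; last by rewrite wH_supp supp_indicator.
by move=> i; rewrite mxE; case: (i \in A); rewrite /= ?lexx ?ler01 lez_nat.
Qed.

Lemma inS_subr_indicator_supp t l E :
  inS t l E -> inS t l (E - indicator (supp E)).
Proof.
move=> [Erange Ewt]; split=> [i|].
  rewrite !mxE inE; case: eqP => /= [->|/eqP Ei0]; first by rewrite subr0 lexx.
  have /andP [E_ge0 E_lel] := Erange i.
  have E_gt0 : 0 < E 0 i by rewrite lt0r Ei0.
  by apply/andP; split; lia.
apply: leq_trans Ewt; apply: subset_leq_card; apply/subsetP => i.
rewrite !inE !mxE inE.
by case: (eqVneq (E 0 i) 0) => [->|]; rewrite ?eqxx ?subr0.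
Qed.

Lemma wH_le1_scale_unitv v :
  (0 < n)%N -> (wH v <= 1)%N -> exists i, v = v 0 i *: unitv i.
Proof.
move=> n_gt0 v_wH; suff [i vi] : exists i, forall k, k != i -> v 0 k = 0.
  exists i; apply/rowP => k; rewrite !mxE eqxx /=.
  by case: (eqVneq k i) => [->|/vi ->]; rewrite ?mulr1 ?mulr0.
case: (set_0Vmem (supp v)) => [v0 | [i vi]].
  exists (Ordinal n_gt0) => k _; apply/eqP/negbNE.
  by have := in_set0 k; rewrite -v0 inE => ->.
exists i => k ki; apply/eqP/negbNE/negP => vk.
have : (#|[set i; k]| <= #|supp v|)%N.
  by apply/subset_leq_card/subsetP => j; rewrite in_set2 => /orP [] /eqP -> //; rewrite inE.
by rewrite cards2 eq_sym ki -wH_supp; lia.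
Qed.

End Support.

Lemma is_lattice0 (n : nat) (L : 'rV[int]_n -> Prop) : is_lattice L -> L 0.
Proof. by move=> [B [_ LB]]; apply/LB; exists 0; rewrite mul0mx. Qed.

Lemma covering_error_wH_le1 (n l : nat) (L : 'rV[int]_n -> Prop)
    (X E : 'rV[int]_n) :
  (1 <= l)%N -> inA (n - 2) l L -> L X ->
  inS (n - 2) l E -> X + E = ones n -> (wH E <= 1)%N.
Proof.
move=> l_ge1 [/is_lattice0 L0 packing] LX E_S XE1.
rewrite leqNgt; apply/negP => E_wH.
have n_gt0 : (0 < n)%N by case: E_S => _; lia.
have XE : X = ones n - E by rewrite -XE1 addrK.
have X_neq0 : X != 0.
  apply/eqP => X0; have [_] := E_S; rewrite wH_supp.
  suff -> : supp E = setT by rewrite cardsT card_ord; lia.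
  apply/setP => i; rewrite !inE; apply/eqP => Ei0.
  by move/rowP/(_ i): XE; rewrite X0 !mxE Ei0.
have E'_S := inS_subr_indicator_supp E_S.
have C_S : inS (n - 2) l (indicator (~: supp E)).
  apply: inS_indicator => //; have := cardsC (supp E).
  by rewrite card_ord -wH_supp; lia.
have := packing X 0 _ _ LX L0 X_neq0 E'_S C_S.
by rewrite add0r XE addrA subrK ones_subr_indicator eqxx.
Qed.

Theorem mainTheorem15 (n l : nat) (L : 'rV[int]_n -> Prop) :
  (2 <= n)%N -> (1 <= l)%N -> inA (n - 2) l L ->
  forall X : 'rV[int]_n, L X -> covers l X (ones n) ->
  exists (i : 'I_n) (lam : nat),
    (lam <= l)%N /\ X = ones n - lam%:Z *: unitv i.
Proof.
move=> n_ge2 l_ge1 LA X LX [E [E_S onesXE]].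
have E_wH := covering_error_wH_le1 l_ge1 LA LX E_S (esym onesXE).
have [i Ei] := wH_le1_scale_unitv (leq_trans (isT : (0 < 2)%N) n_ge2) E_wH.
have /andP [Ei_ge0 Ei_lel] := E_S.1 i.
exists i, (absz (E 0 i)); split; first by rewrite -lez_nat abszE ger0_norm.
by rewrite abszE ger0_norm // -Ei onesXE addrK.
Qed.
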